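(* Let $K\ge1$, $\delta>1$, $\alpha\in(0,1)$ with $p/n\le\delta^{-1}<1-\alpha$, $\tau>0$, and positive constants $\phi_*,\phi^*$. If $(Y,X)\in U$ and $X\in U_x$, then $$\frac1n\sum_{i=1}^nH_i\otimes(x_ix_i^T)\succeq c_1(I_K\otimes\Sigma),$$ where $c_1>0$ depends only on $(K,\tau,\alpha,\phi_* )$.
   Context: $\Sigma\in\mathbb{R}^{p\times p}$ is positive definite; $x_i^T$ are the rows of $X\in\mathbb{R}^{n\times p}$; $Y$ has rows $\mathsf y_i\in\mathbb{R}^{K+1}$. $\mathcal L_i(u)=-\sum_k\mathsf y_{ik}u_k+\log\sum_{k'}e^{u_{k'}}$, $\hat{\mathsf B}\in\arg\min_{\mathsf B\in\mathbb{R}^{p\times(K+1)}}\sum_i\mathcal L_i(\mathsf B^Tx_i)$, $U=\{(Y,X):\hat{\mathsf B}\text{ exists},\ \|X\hat{\mathsf B}(I_{K+1}-\frac{\mathbf 1\mathbf 1^T}{K+1})\|_F^2<n\tau\}$. $\mathcal I=\{I\subset[n]:|I|=\lceil n(1-\alpha)\rceil\}$, $P_I=\sum_{i\in I}e_ie_i^T$, $U_x=\{X:\min_{I\in\mathcal I}\lambda_{\min}(\frac1n\Sigma^{-1/2}X^TP_IX\Sigma^{-1/2})\ge\phi_*^2,\ \frac1{\sqrt n}\|X\Sigma^{-1/2}\|_{op}\le\phi^*\}$. $Q\in\mathbb{R}^{(K+1)\times K}$ with $QQ^T=I_{K+1}-\frac{1}{K+1}\mathbf 1\mathbf 1^T$,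 $Q^TQ=I_K$; $L_i(u)=\mathcal L_i(Qu)$; $\hat B=\hat{\mathsf B}Q$; $H_i=\nabla^2L_i(\hat B^Tx_i)$. *)

From HB Require Import structures.
From mathcomp Require Import all_boot all_order all_algebra.
From mathcomp Require Import all_classical all_reals all_analysis.
From mathcomp Require Import mxtens.
Set Implicit Arguments. Unset Strict Implicit. Unset Printing Implicit Defensive.
Import Order.TTheory GRing.Theory Num.Theory.
Import numFieldNormedType.Exports.
Local Open Scope ring_scope.

Section Defs.
Variable R : realType.

Definition mlogit_loss (m : nat) (y u : 'rV[R]_m) : R :=
  - (\sum_(k < m) y 0 k * u 0 k) + ln (\sum_(k < m) expR (u 0 k)).

(* sum_i L_i(B^T x_i), with x_i^T = row i X and y_i^T = row i Y *)
Definition mlogit_obj (n p m : nat) (Y : 'M[R]_(n, m)) (X : 'M[R]_(n, p))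
  (B : 'M[R]_(p, m)) : R :=
  \sum_(i < n) mlogit_loss (row i Y) (row i X *m B).

Definition is_argmin_mlogit (n p m : nat) (Y : 'M[R]_(n, m)) (X : 'M[R]_(n, p))
  (B : 'M[R]_(p, m)) : Prop :=
  forall B' : 'M[R]_(p, m), mlogit_obj Y X B <= mlogit_obj Y X B'.

Definition centering_mx (m : nat) : 'M[R]_m :=
  1%:M - (m%:R)^-1 *: const_mx 1.

Definition frob2 (a b : nat) (A : 'M[R]_(a, b)) : R :=
  \sum_(i < a) \sum_(j < b) A i j ^+ 2.

Definition vnorm (a : nat) (v : 'cV[R]_a) : R :=
  Num.sqrt (\sum_(i < a) v i 0 ^+ 2).

Definition qform (a : nat) (M : 'M[R]_a) (v : 'cV[R]_a) : R :=
  (v^T *m M *m v) 0 0.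

Definition sym_mx (a : nat) (M : 'M[R]_a) : Prop := M^T = M.

Definition posdef (a : nat) (M : 'M[R]_a) : Prop :=
  sym_mx M /\ forall v : 'cV[R]_a, v != 0 -> 0 < qform M v.

Definition loewner_ge (a : nat) (A B : 'M[R]_a) : Prop :=
  forall v : 'cV[R]_a, 0 <= qform (A - B) v.

(* lambda_min(M) >= c, with lambda_min(M) = min_{|v|=1} v^T M v (M symmetric) *)
Definition lambda_min_ge (a : nat) (M : 'M[R]_a) (c : R) : Prop :=
  forall v : 'cV[R]_a, vnorm v = 1 -> c <= qform M v.

Definition opnorm_le (a b : nat) (A : 'M[R]_(a, b)) (c : R) : Prop :=
  forall v : 'cV[R]_b, vnorm (A *m v) <= c * vnorm v.

Definition proj_idx (n : nat) (I : {set 'I_n}) : 'M[R]_n :=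
  \sum_(i in I) delta_mx i i.

Definition hessian (K : nat) (f : 'rV[R]_K -> R) (u : 'rV[R]_K) : 'M[R]_K :=
  \matrix_(j < K, k < K)
    derive (fun w => derive f w (delta_mx 0 j)) u (delta_mx 0 k).

End Defs.

From HB Require Import structures.
From mathcomp Require Import all_boot all_order all_algebra.
From mathcomp Require Import all_classical all_reals all_analysis.
From mathcomp Require Import mxtens.
From mathcomp Require Import ring lra.
Import Order.TTheory GRing.Theory Num.Theory.
Import numFieldNormedType.Exports.
Local Open Scope ring_scope.
Set Implicit Arguments. Unset Strict Implicit. Unset Printing Implicit Defensive.

(* The Hessian of [u |-> L_i(Q u)] is [Q^T (diag pi - pi^T pi) Q], where [pi] is the softmax of the
   centered logits [x_i^T B C]; its quadratic form at [w] is the [pi]-weighted variance of [Q w],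
   a vector with zero sum, so it is at least [min_l pi_l * |w|^2], and always nonnegative.
   Since [|X B C|_F^2 < n tau], Markov's inequality leaves at least [ceil(n (1 - alpha))] rows
   with squared logit norm at most [tau / alpha], on which [pi_l >= e^(-2 (1 + tau/alpha)) / (K+1)].
   Keeping only these rows [I] in the Kronecker sum and applying the lower bound on
   [lambda_min (Sigma^(-1/2) X^T P_I X Sigma^(-1/2) / n)] gives [c1 = phi_*^2 e^(-2 (1 + tau/alpha)) / (K+1)]. *)

Section QuadraticForms.
Variable R : realType.

Lemma bilinear_formE a (B : 'M[R]_a) (x y : 'cV[R]_a) :
  (x^T *m B *m y) 0 0 = \sum_(l < a) \sum_(m < a) x l 0 * B l m * y m 0.
Proof.
rewrite mxE exchange_big /=; apply: eq_bigr => m _.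
by rewrite mxE mulr_suml; apply: eq_bigr => l _; rewrite mxE.
Qed.

Lemma qformB a (A B : 'M[R]_a) v : qform (A - B) v = qform A v - qform B v.
Proof. by rewrite /qform mulmxBr mulmxBl !mxE. Qed.

Lemma qformZ a (A : 'M[R]_a) c v : qform (c *: A) v = c * qform A v.
Proof. by rewrite /qform -scalemxAr -scalemxAl mxE. Qed.

Lemma qform_sum a n (A : 'I_n -> 'M[R]_a) v :
  qform (\sum_(i < n) A i) v = \sum_(i < n) qform (A i) v.
Proof. by rewrite /qform mulmx_sumr mulmx_suml summxE. Qed.

Lemma qform_scale a (A : 'M[R]_a) c v : qform A (c *: v) = c ^+ 2 * qform A v.
Proof.
rewrite /qform; have -> : (c *: v)^T = c *: v^T by apply/matrixP => i j; rewrite !mxE.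
by rewrite -!scalemxAl -scalemxAr !mxE mulrA expr2.
Qed.

Lemma qform_mulmx a b (A : 'M[R]_a) (M : 'M[R]_(a, b)) w :
  qform A (M *m w) = qform (M^T *m A *m M) w.
Proof. by rewrite /qform trmx_mul !mulmxA. Qed.

Lemma qform1 a (w : 'cV[R]_a) : qform 1%:M w = \sum_(i < a) w i 0 ^+ 2.
Proof. by rewrite /qform mulmx1 mxE; apply: eq_bigr => i _; rewrite mxE expr2. Qed.

Lemma qform1_ge0 a (w : 'cV[R]_a) : 0 <= qform 1%:M w.
Proof. by rewrite qform1 sumr_ge0 // => i _; rewrite sqr_ge0. Qed.

Lemma qform1_eq0 a (w : 'cV[R]_a) : (qform 1%:M w == 0) = (w == 0).
Proof.
apply/idP/eqP => [|->]; last by rewrite /qform mulmx0 mxE.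
rewrite qform1 psumr_eq0 => [/allP w0|i _]; last exact: sqr_ge0.
apply/matrixP => i j; rewrite ord1 mxE.
by apply/eqP; rewrite -sqrf_eq0; apply: (implyP (w0 i (mem_index_enum i))).
Qed.

Lemma qform_proj n (I : {set 'I_n}) (z : 'cV[R]_n) :
  qform (proj_idx R I) z = \sum_(i in I) z i 0 ^+ 2.
Proof.
rewrite /proj_idx /qform mulmx_sumr mulmx_suml summxE; apply: eq_bigr => i _.
have -> : delta_mx i i = (delta_mx 0 i)^T *m (delta_mx (0 : 'I_1) i : 'rV[R]_n).
  by rewrite trmx_delta mul_delta_mx.
by rewrite mulmxA -trmx_mul -rowE -mulmxA -rowE mxE big_ord1 !mxE expr2.
Qed.

Lemma vnormE a (w : 'cV[R]_a) : vnorm w = Num.sqrt (qform 1%:M w).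
Proof. by rewrite qform1. Qed.

Lemma lambda_min_ge_qform a (M : 'M[R]_a) c :
  lambda_min_ge M c -> forall w, c * qform 1%:M w <= qform M w.
Proof.
move=> hM w; have [->|w0] := eqVneq w 0; first by rewrite /qform !mulmx0 !mxE mulr0.
set s := qform 1%:M w.
have s0 : 0 < s by rewrite lt_def qform1_eq0 w0 qform1_ge0.
have := hM ((Num.sqrt s)^-1 *: w).
rewrite vnormE !qform_scale exprVn (sqr_sqrtr (ltW s0)) -/s mulVf ?gt_eqF // sqrtr1.
by move=> /(_ erefl); rewrite mulrC ler_pdivlMr.
Qed.

Lemma posdef_unitmx a (M : 'M[R]_a) : posdef M -> M \in unitmx.
Proof.
case=> _ pM; rewrite -row_free_unit; apply: inj_row_free => v vM.
apply/eqP; rewrite -trmx_eq0; apply: contraTT isT => /pM.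
by rewrite /qform trmxK vM mul0mx mxE ltxx.
Qed.

Lemma lambda_min_ge_whitened n p (Sigma S : 'M[R]_p) (X : 'M[R]_(n, p))
    (I : {set 'I_n}) (phi : R) :
  (0 < n)%N -> posdef Sigma -> posdef S -> S *m S = invmx Sigma ->
  lambda_min_ge (n%:R^-1 *: (S *m X^T *m proj_idx R I *m X *m S)) (phi ^+ 2) ->
  forall u, n%:R * phi ^+ 2 * qform Sigma u <= \sum_(i in I) (X *m u) i 0 ^+ 2.
Proof.
move=> n0 pSigma pS SS hM u.
have uS := posdef_unitmx pS; have sS : S^T = S by case: pS.
have SSigmaS : S *m Sigma *m S = 1%:M.
  have uSigma := posdef_unitmx pSigma.
  have -> : S *m Sigma *m S = invmx S *m (S *m S) *m Sigma *m S.
    by rewrite mulmxA mulVmx // mul1mx.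
  by rewrite SS -(mulmxA (invmx S)) mulVmx // mulmx1 mulVmx.
set w := invmx S *m u; have uw : u = S *m w by rewrite mulKVmx.
have -> : qform Sigma u = qform 1%:M w by rewrite uw qform_mulmx sS SSigmaS.
have := lambda_min_ge_qform hM w.
have -> : S *m X^T *m proj_idx R I *m X *m S = (X *m S)^T *m proj_idx R I *m (X *m S).
  by rewrite trmx_mul sS !mulmxA.
rewrite qformZ -qform_mulmx -mulmxA -uw qform_proj => hw.
by rewrite -mulrA -ler_pdivlMl ?ltr0n.
Qed.

Lemma centering_mx_const m : centering_mx R m *m const_mx 1 = 0 :> 'cV[R]_m.
Proof.
apply/matrixP => i j.
have m0 : m%:R != 0 :> R by rewrite pnatr_eq0 -lt0n (leq_ltn_trans _ (ltn_ord i)).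
rewrite /centering_mx mulmxBl mul1mx -scalemxAl !mxE.
under eq_bigr do rewrite !mxE mulr1.
by rewrite sumr_const card_ord mulVf // subrr.
Qed.

Lemma centered_sum_eq0 m k (Q : 'M[R]_(m, k)) (w : 'cV[R]_k) :
  Q *m Q^T = centering_mx R m -> \sum_(l < m) (Q *m w) l 0 = 0.
Proof.
move=> QQt; set o := const_mx 1 : 'cV[R]_m.
have Qto : Q^T *m o = 0.
  apply/eqP; rewrite -qform1_eq0 /qform mulmx1 trmx_mul trmxK -mulmxA (mulmxA Q) QQt.
  by rewrite centering_mx_const mulmx0 mxE.
have -> : \sum_(l < m) (Q *m w) l 0 = (o^T *m (Q *m w)) 0 0.
  by rewrite mxE; apply: eq_bigr => l _; rewrite !mxE mul1r.
by rewrite mulmxA -(trmxK (o^T *m Q)) trmx_mul trmxK Qto trmx0 mul0mx mxE.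
Qed.

End QuadraticForms.

Section Kronecker.
Variable R : realType.

(* The columns of [unvec v] are the length-[p] blocks of [v], indexed as in [A *t B]. *)
Definition unvec K p (v : 'cV[R]_(K * p)) : 'M[R]_(p, K) :=
  \matrix_(l, j) v (mxtens_index (j, l)) 0.

Lemma sum_mxtens_index m p (F : 'I_(m * p) -> R) :
  \sum_(a < m * p) F a = \sum_(j < m) \sum_(l < p) F (mxtens_index (j, l)).
Proof.
rewrite pair_big (reindex (@mxtens_index m p)) /=; last first.
  by exists (@mxtens_unindex m p) => x _; [rewrite mxtens_indexK | rewrite mxtens_unindexK].
by apply: eq_bigr => -[j l].
Qed.

Lemma qform_tens K p (A : 'M[R]_K) (B : 'M[R]_p) v :
  qform (A *t B) v = \sum_(j < K) \sum_(k < K)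
    A j k * ((col j (unvec v))^T *m B *m col k (unvec v)) 0 0.
Proof.
rewrite /qform bilinear_formE sum_mxtens_index; apply: eq_bigr => j _.
under eq_bigr do rewrite sum_mxtens_index.
rewrite exchange_big; apply: eq_bigr => k _.
rewrite bilinear_formE mulr_sumr; apply: eq_bigr => l _.
rewrite mulr_sumr; apply: eq_bigr => m _.
by rewrite tensmxE !mxE; ring.
Qed.

Lemma qform_tens_rank1 K p (A : 'M[R]_K) (x : 'rV[R]_p) v :
  qform (A *t (x^T *m x)) v = qform A ((x *m unvec v)^T).
Proof.
have xcol j : x *m col j (unvec v) = col j (x *m unvec v) by rewrite !colE mulmxA.
rewrite qform_tens /qform bilinear_formE; apply: eq_bigr => j _; apply: eq_bigr => k _.
by rewrite mulmxA -trmx_mul -mulmxA !xcol mxE big_ord1 !mxE; ring.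
Qed.

Lemma qform_tens_id K p (S : 'M[R]_p) v :
  qform ((1%:M : 'M[R]_K) *t S) v = \sum_(j < K) qform S (col j (unvec v)).
Proof.
rewrite qform_tens; apply: eq_bigr => j _.
rewrite (bigD1 j) //= [(1%:M : 'M[R]_K) j j]mxE eqxx mul1r big1 ?addr0 // => k kj.
by rewrite [(1%:M : 'M[R]_K) j k]mxE eq_sym (negPf kj) mul0r.
Qed.

Lemma loewner_ge_sum_tens n p K (H : 'I_n -> 'M[R]_K) (X : 'M[R]_(n, p))
    (S : 'M[R]_p) (I : {set 'I_n}) (c d : R) :
  (0 < n)%N -> 0 <= c ->
  (forall i w, 0 <= qform (H i) w) ->
  (forall i w, i \in I -> c * qform 1%:M w <= qform (H i) w) ->
  (forall u, n%:R * d * qform S u <= \sum_(i in I) (X *m u) i 0 ^+ 2) ->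
  loewner_ge (n%:R^-1 *: \sum_(i < n) (H i *t ((row i X)^T *m row i X)))
             ((c * d) *: ((1%:M : 'M[R]_K) *t S)).
Proof.
move=> n0 c0 H0 HI XS v.
rewrite qformB !qformZ qform_sum qform_tens_id subr_ge0.
under [X in _ <= _ * X]eq_bigr do rewrite qform_tens_rank1.
set V := unvec v.
have normW i : qform 1%:M ((row i X *m V)^T) = \sum_(j < K) (X *m col j V) i 0 ^+ 2.
  by rewrite qform1; apply: eq_bigr => j _; rewrite colE mulmxA -colE -row_mul !mxE.
rewrite ler_pdivlMl ?ltr0n //.
have -> : n%:R * (c * d * \sum_(j < K) qform S (col j V))
    = c * \sum_(j < K) n%:R * d * qform S (col j V).
  by rewrite !mulr_sumr; apply: eq_bigr => j _; ring.
apply: (le_trans (y := c * \sum_(j < K) \sum_(i in I) (X *m col j V) i 0 ^+ 2)).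
  by rewrite ler_wpM2l // ler_sum.
rewrite exchange_big /= mulr_sumr.
apply: (le_trans (y := \sum_(i in I) qform (H i) ((row i X *m V)^T))).
  by apply: ler_sum => i iI; rewrite -normW HI.
by rewrite [X in _ <= X](bigID (mem I)) /= lerDl sumr_ge0.
Qed.

End Kronecker.

Section WeightedVariance.
Variable R : realFieldType.

Lemma weighted_variance_ge m (p v : 'I_m -> R) (c : R) :
  \sum_(l < m) p l = 1 -> 0 <= c -> (forall l, c <= p l) -> \sum_(l < m) v l = 0 ->
  c * \sum_(l < m) v l ^+ 2
    <= \sum_(l < m) p l * v l ^+ 2 - (\sum_(l < m) p l * v l) ^+ 2.
Proof.
move=> p1 c0 cp v0; set mu := \sum_(l < m) p l * v l.
have -> : \sum_(l < m) p l * v l ^+ 2 - mu ^+ 2 = \sum_(l < m) p l * (v l - mu) ^+ 2.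
  rewrite [RHS](eq_bigr (fun l => p l * v l ^+ 2 - 2 * mu * (p l * v l) + mu ^+ 2 * p l)).
    by rewrite big_split sumrB /= -!mulr_sumr p1 -/mu; ring.
  by move=> l _; ring.
apply: (le_trans (y := c * \sum_(l < m) (v l - mu) ^+ 2)).
  rewrite ler_wpM2l // [X in _ <= X](eq_bigr (fun l => v l ^+ 2 - 2 * mu * v l + mu ^+ 2)).
    by rewrite big_split sumrB /= -mulr_sumr v0 mulr0 subr0 lerDl sumr_ge0 // => l _; rewrite sqr_ge0.
  by move=> l _; ring.
rewrite mulr_sumr; apply: ler_sum => l _.
by rewrite ler_wpM2r ?sqr_ge0.
Qed.

End WeightedVariance.

Section Derivatives.
Variable R : realType.

Lemma derive_along_line (V W : normedModType R) (f : V -> W) (a v : V) :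
  derive f a v = derive (fun t : R => f (a + t *: v)) 0 1.
Proof.
rewrite /derive /= scale0r addr0.
suff -> : (fun h : R => h^-1 *: (f (a + (h%:A + 0 : R) *: v) - f a))
  = (fun h : R => h^-1 *: (f (h *: v + a) - f a)) by [].
by apply/funext => h; rewrite addr0 [a + _]addrC [h%:A]mulr1.
Qed.

Lemma derive_mulmx m k (W : normedModType R) (f : 'rV[R]_m -> W) (M : 'M[R]_(k, m)) a v :
  derive (fun w => f (w *m M)) a v = derive f (a *m M) (v *m M).
Proof.
rewrite [LHS]derive_along_line [RHS]derive_along_line.
suff -> : (fun t : R => f ((a + t *: v) *m M)) = (fun t => f (a *m M + t *: (v *m M))) by [].
by apply/funext => t; rewrite mulmxDl scalemxAl.
Qed.

Lemma is_derive_affine (a b t : R) : is_derive t 1 (fun s : R => a + s * b) b.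
Proof.
have -> : (fun s : R => a + s * b) = cst a + b \*: id.
  by apply/funext => s /=; rewrite mulrC.
apply: (is_derive_eq (is_deriveD (is_derive_cst a t 1) (is_deriveZ b (is_derive_id t 1)))).
by rewrite add0r [b *: 1]mulr1.
Qed.

Lemma is_derive_expR_line (a b c t : R) :
  is_derive t 1 (fun s => expR (a + s * b) * c) (expR (a + t * b) * (b * c)).
Proof.
have -> : (fun s => expR (a + s * b) * c) = c \*: (expR \o (fun s => a + s * b)).
  by apply/funext => s /=; rewrite mulrC.
apply: (is_derive_eq (is_deriveZ c (is_derive1_comp (is_derive_expR _) (is_derive_affine a b t)))).
by rewrite [c *: _]mulrC mulrA.
Qed.

Lemma is_derive_sum_expR_line m (a b : 'rV[R]_m) (c : 'I_m -> R) (t : R) :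
  is_derive t 1 (fun s => \sum_(l < m) expR ((a + s *: b) 0 l) * c l)
    (\sum_(l < m) expR ((a + t *: b) 0 l) * (b 0 l * c l)).
Proof.
have -> : (fun s => \sum_(l < m) expR ((a + s *: b) 0 l) * c l)
    = \sum_(l < m) (fun s => expR (a 0 l + s * b 0 l) * c l).
  by apply/funext => s; rewrite fct_sumE; apply: eq_bigr => l _; rewrite !mxE.
have -> : \sum_(l < m) expR ((a + t *: b) 0 l) * (b 0 l * c l)
    = \sum_(l < m) expR (a 0 l + t * b 0 l) * (b 0 l * c l).
  by apply: eq_bigr => l _; rewrite !mxE.
exact: is_derive_sum (fun l => is_derive_expR_line _ _ _ _).
Qed.

End Derivatives.

Section Softmax.
Variable R : realType.

Definition softmax m (a : 'rV[R]_m) : 'rV[R]_m :=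
  \row_l (expR (a 0 l) / \sum_(k < m) expR (a 0 k)).

Definition lse_hessian m (a : 'rV[R]_m) : 'M[R]_m :=
  diag_mx (softmax a) - (softmax a)^T *m softmax a.

Lemma sum_expR_gt0 m (a : 'rV[R]_m.+1) : 0 < \sum_(l < m.+1) expR (a 0 l).
Proof. by rewrite big_ord_recl ltr_pwDl ?expR_gt0 // sumr_ge0 // => l _; rewrite expR_ge0. Qed.

Lemma softmax_ge0 m (a : 'rV[R]_m) l : 0 <= softmax a 0 l.
Proof. by rewrite mxE divr_ge0 ?expR_ge0 // sumr_ge0 // => k _; rewrite expR_ge0. Qed.

Lemma softmax_sum1 m (a : 'rV[R]_m.+1) : \sum_(l < m.+1) softmax a 0 l = 1.
Proof.
under eq_bigr do rewrite mxE.
by rewrite -mulr_suml mulfV // gt_eqF ?sum_expR_gt0.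
Qed.

Lemma softmax_dot m (a : 'rV[R]_m) (c : 'I_m -> R) :
  \sum_(l < m) softmax a 0 l * c l
    = (\sum_(l < m) expR (a 0 l) * c l) / \sum_(l < m) expR (a 0 l).
Proof. by rewrite mulr_suml; apply: eq_bigr => l _; rewrite mxE mulrAC. Qed.

Lemma softmax_ge m (a : 'rV[R]_m.+1) (T : R) l :
  \sum_(k < m.+1) a 0 k ^+ 2 <= T ->
  expR (- (1 + T)) / (m.+1%:R * expR (1 + T)) <= softmax a 0 l.
Proof.
move=> aT.
have a_le k : `|a 0 k| <= 1 + T.
  have : a 0 k ^+ 2 <= T.
    by apply: le_trans aT; rewrite (bigD1 k) //= lerDl sumr_ge0 // => i _; rewrite sqr_ge0.
  have := normr_ge0 (a 0 k); have := real_normK (num_real (a 0 k)); nra.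
rewrite mxE; apply: ler_pM.
- exact: expR_ge0.
- by rewrite invr_ge0 mulr_ge0 ?ler0n ?expR_ge0.
- by rewrite ler_expR; move: (a_le l); rewrite ler_norml => /andP[].
rewrite lef_pV2 ?posrE ?sum_expR_gt0 ?mulr_gt0 ?ltr0n ?expR_gt0 //.
have -> : m.+1%:R * expR (1 + T) = \sum_(k < m.+1) expR (1 + T).
  by rewrite sumr_const card_ord mulr_natl.
by apply: ler_sum => k _; rewrite ler_expR (le_trans (ler_norm _)).
Qed.

Lemma lse_hessian_bilinE m (a b c : 'rV[R]_m) :
  (c *m lse_hessian a *m b^T) 0 0 = \sum_(l < m) softmax a 0 l * (b 0 l * c 0 l)
    - (\sum_(l < m) softmax a 0 l * c 0 l) * (\sum_(l < m) softmax a 0 l * b 0 l).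
Proof.
rewrite /lse_hessian mulmxBr mulmxBl mxE [X in _ + X = _]mxE; congr (_ - _).
  rewrite mul_mx_diag mxE; apply: eq_bigr => l _; rewrite !mxE; ring.
rewrite !mulmxA -(mulmxA (c *m _)) mxE big_ord1.
by congr (_ * _); rewrite mxE; apply: eq_bigr => l _; rewrite !mxE // mulrC.
Qed.

Lemma qform_lse_hessian m (a : 'rV[R]_m) (v : 'cV[R]_m) :
  qform (lse_hessian a) v
    = \sum_(l < m) softmax a 0 l * v l 0 ^+ 2 - (\sum_(l < m) softmax a 0 l * v l 0) ^+ 2.
Proof.
rewrite /qform -[X in _ *m X]trmxK lse_hessian_bilinE expr2.
by congr (_ - _ * _); apply: eq_bigr => l _; rewrite !mxE ?expr2.
Qed.

Lemma lse_hessian_ge m (a : 'rV[R]_m.+1) (v : 'cV[R]_m.+1) (c : R) :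
  0 <= c -> (forall l, c <= softmax a 0 l) -> \sum_(l < m.+1) v l 0 = 0 ->
  c * qform 1%:M v <= qform (lse_hessian a) v.
Proof.
by move=> c0 cp v0; rewrite qform1 qform_lse_hessian weighted_variance_ge ?softmax_sum1.
Qed.

End Softmax.

Section MlogitHessian.
Variable R : realType.

Lemma derive_mlogit_loss m (y a b : 'rV[R]_m.+1) :
  derive (mlogit_loss y) a b
  = \sum_(l < m.+1) softmax a 0 l * b 0 l - \sum_(l < m.+1) y 0 l * b 0 l.
Proof.
rewrite derive_along_line.
(* The factor [1] makes [S] an instance of [is_derive_sum_expR_line]. *)
set S := fun s => \sum_(l < m.+1) expR ((a + s *: b) 0 l) * 1.
have -> : (fun t => mlogit_loss y (a + t *: b))
    = - (fun s => \sum_(l < m.+1) y 0 l * a 0 l + s * \sum_(l < m.+1) y 0 l * b 0 l)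
      + ((@ln R) \o S).
  apply/funext => s /=; rewrite /mlogit_loss /S; congr (- _ + ln _).
    by rewrite mulr_sumr -big_split /=; apply: eq_bigr => l _; rewrite !mxE; ring.
  by apply: eq_bigr => l _; rewrite mulr1.
have S0 : 0 < S 0.
  by rewrite /S scale0r addr0; under eq_bigr do rewrite mulr1; exact: sum_expR_gt0.
have dS := is_derive_sum_expR_line a b (fun=> 1) 0.
rewrite (@derive_val _ _ _ _ _ _ _
  (is_deriveD (is_deriveN (is_derive_affine _ _ 0)) (is_derive1_comp (is_derive1_ln S0) dS))).
transitivity ((\sum_(l < m.+1) expR (a 0 l) * b 0 l) / (\sum_(l < m.+1) expR (a 0 l))
    - \sum_(l < m.+1) y 0 l * b 0 l).
  rewrite /S scale0r addr0 addrC mulrC.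
  by congr (_ / _ - _); apply: eq_bigr => l _; rewrite !mulr1.
by rewrite softmax_dot.
Qed.

Lemma derive2_mlogit_loss m (y a b c : 'rV[R]_m.+1) :
  derive (fun a => derive (mlogit_loss y) a c) a b = (c *m lse_hessian a *m b^T) 0 0.
Proof.
rewrite derive_along_line.
set N := fun s => \sum_(l < m.+1) expR ((a + s *: b) 0 l) * c 0 l.
set S := fun s => \sum_(l < m.+1) expR ((a + s *: b) 0 l) * 1.
have -> : (fun t => derive (mlogit_loss y) (a + t *: b) c)
    = N * (fun s => (S s)^-1) - cst (\sum_(l < m.+1) y 0 l * c 0 l).
  apply/funext => s /=; rewrite derive_mlogit_loss softmax_dot.
  by congr (_ / _ - _); apply: eq_bigr => l _; rewrite mulr1.
have S0 : S 0 != 0.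
  by rewrite /S scale0r addr0; under eq_bigr do rewrite mulr1; rewrite gt_eqF ?sum_expR_gt0.
have dN := is_derive_sum_expR_line a b (fun l => c 0 l) 0.
have dS := is_derive_sum_expR_line a b (fun=> 1) 0.
have dY := is_derive_cst (\sum_(l < m.+1) y 0 l * c 0 l) (0 : R) (1 : R).
rewrite (@derive_val _ _ _ _ _ _ _ (is_deriveB (is_deriveM dN (is_deriveV S0 dS)) dY)).
rewrite lse_hessian_bilinE !softmax_dot /N /S scale0r addr0 subr0 in S0 *.
have S1 : \sum_(l < m.+1) expR (a 0 l) * 1 = \sum_(l < m.+1) expR (a 0 l).
  by apply: eq_bigr => l _; rewrite mulr1.
have Sb : \sum_(l < m.+1) expR (a 0 l) * (b 0 l * 1) = \sum_(l < m.+1) expR (a 0 l) * b 0 l.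
  by apply: eq_bigr => l _; rewrite mulr1.
rewrite S1 Sb in S0 *; rewrite /GRing.scale /=; field.
by rewrite S0.
Qed.

Lemma hessian_mlogit_loss_mulmx m k (y : 'rV[R]_m.+1) (M : 'M[R]_(k, m.+1)) u :
  hessian (fun w => mlogit_loss y (w *m M)) u = M *m lse_hessian (u *m M) *m M^T.
Proof.
apply/matrixP => j i; rewrite mxE.
have -> : (fun w => derive (fun w => mlogit_loss y (w *m M)) w (delta_mx 0 j))
    = (fun w => derive (mlogit_loss y) (w *m M) (delta_mx 0 j *m M)).
  by apply/funext => w; rewrite derive_mulmx.
rewrite (derive_mulmx (fun a => derive (mlogit_loss y) a (delta_mx 0 j *m M))).
by rewrite derive2_mlogit_loss -!rowE tr_row colE mulmxA -colE -!row_mul !mxE.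
Qed.

Lemma mlogit_hessian_ge m k (Q : 'M[R]_(m.+1, k)) (y : 'rV[R]_m.+1) u (c : R) w :
  Q *m Q^T = centering_mx R m.+1 -> Q^T *m Q = 1%:M -> 0 <= c ->
  (forall l, c <= softmax (u *m Q^T) 0 l) ->
  c * qform 1%:M w <= qform (hessian (fun u => mlogit_loss y (u *m Q^T)) u) w.
Proof.
move=> QQt QtQ c0 cp.
rewrite hessian_mlogit_loss_mulmx trmxK -qform_mulmx.
have -> : qform 1%:M w = qform 1%:M (Q *m w) by rewrite qform_mulmx mulmx1 QtQ.
exact: lse_hessian_ge (centered_sum_eq0 _ QQt).
Qed.

End MlogitHessian.

Lemma exists_subset_card (T : finType) (G : {set T}) k :
  (k <= #|G|)%N -> exists2 I : {set T}, I \subset G & #|I| = k.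
Proof.
elim: k => [|k IH] kG; first by exists finset.set0; rewrite ?finset.sub0set ?finset.cards0.
have [I sIG cI] := IH (ltnW kG).
have : (0 < #|G :\: I|)%N by rewrite cardsD (finset.setIidPr sIG) cI subn_gt0.
case/card_gt0P => x; rewrite inE => /andP[xI xG].
by exists (x |: I); rewrite ?finset.subUset ?finset.sub1set ?xG ?sIG // cardsU1 xI cI.
Qed.

Section MarkovSubset.
Variable R : realType.

Lemma markov_subset n (F : 'I_n -> R) (alpha tau : R) :
  0 < tau -> 0 < alpha < 1 -> (forall i, 0 <= F i) -> \sum_(i < n) F i < n%:R * tau ->
  exists I : {set 'I_n}, #|I|%:Z = Num.ceil (n%:R * (1 - alpha))
                         /\ forall i, i \in I -> F i <= tau / alpha.
Proof.
move=> tau0 /andP[a0 a1] F0 Fn; set G := [set i | F i <= tau / alpha].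
have few_large : #|~: G|%:R < n%:R * alpha.
  have : #|~: G|%:R * (tau / alpha) < n%:R * tau.
    apply: le_lt_trans Fn; rewrite mulr_natl -sumr_const.
    apply: (le_trans (y := \sum_(i in ~: G) F i)).
      by apply: ler_sum => i; rewrite !inE -ltNge => /ltW.
    by rewrite [X in _ <= X](bigID (mem (~: G))) /= lerDl sumr_ge0.
  by rewrite mulrA ltr_pdivrMr // -mulrA [tau * _]mulrC mulrA ltr_pM2r.
have many_small : n%:R * (1 - alpha) <= #|G|%:R.
  have := cardsC G; rewrite card_ord => /(congr1 (GRing.natmul (1 : R))).
  by rewrite natrD; nra.
have c0 : 0 <= Num.ceil (n%:R * (1 - alpha)).
  by rewrite ceil_ge0 (lt_le_trans _ (mulr_ge0 (ler0n _ n) _)) ?subr_ge0 ?ltW ?ltrN10.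
have cG : (`|Num.ceil (n%:R * (1 - alpha))| <= #|G|)%N.
  by rewrite -lez_nat gez0_abs // ceil_le_int.
have [I sIG cI] := exists_subset_card cG.
exists I; split; first by rewrite cI gez0_abs.
by move=> i /(fintype.subsetP sIG); rewrite inE.
Qed.

End MarkovSubset.

Theorem lemmaS6p4 (R : realType) (K : nat) (tau alpha phi_lo : R) :
  (1 <= K)%N -> 0 < tau -> 0 < alpha < 1 -> 0 < phi_lo ->
  exists c1 : R, 0 < c1 /\
  forall (n p : nat) (delta phi_hi : R)
    (Sigma Sinvhalf : 'M[R]_p) (X : 'M[R]_(n, p)) (Y : 'M[R]_(n, K.+1))
    (Bhat : 'M[R]_(p, K.+1)) (Q : 'M[R]_(K.+1, K)),
  (0 < n)%N -> 1 < delta -> 0 < phi_hi ->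
  p%:R / n%:R <= delta^-1 -> delta^-1 < 1 - alpha ->
  (* Sigma positive definite, Sinvhalf = Sigma^{-1/2} (the p.d. square root of Sigma^{-1}) *)
  posdef Sigma -> posdef Sinvhalf -> Sinvhalf *m Sinvhalf = invmx Sigma ->
  (* Q Q^T = I - 11^T/(K+1),  Q^T Q = I_K *)
  Q *m Q^T = @centering_mx R K.+1 -> Q^T *m Q = 1%:M ->
  (* (Y, X) in U *)
  is_argmin_mlogit Y X Bhat ->
  frob2 (X *m Bhat *m @centering_mx R K.+1) < n%:R * tau ->
  (* X in U_x *)
  (forall I : {set 'I_n}, (#|I|%:Z = Num.ceil (n%:R * (1 - alpha)))%R ->
     lambda_min_ge ((n%:R)^-1 *: (Sinvhalf *m X^T *m @proj_idx R n I *m X *m Sinvhalf))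
                   (phi_lo ^+ 2)) ->
  opnorm_le ((Num.sqrt n%:R)^-1 *: (X *m Sinvhalf)) phi_hi ->
  loewner_ge
    ((n%:R)^-1 *: \sum_(i < n)
        (hessian (fun u : 'rV[R]_K => mlogit_loss (row i Y) (u *m Q^T))
                 (row i X *m Bhat *m Q)
         *t ((row i X)^T *m row i X)))
    (c1 *: ((1%:M : 'M[R]_K) *t Sigma)).
Proof.
move=> _ tau0 alpha01 phi0; set T := tau / alpha.
set c := expR (- (1 + T)) / (K.+1%:R * expR (1 + T)).
have c0 : 0 < c by rewrite divr_gt0 ?expR_gt0 // mulr_gt0 ?ltr0n ?expR_gt0.
exists (c * phi_lo ^+ 2); split; first by rewrite mulr_gt0 // exprn_gt0.
move=> n p delta phi_hi Sigma S X Y Bhat Q n0 _ _ _ _ pSigma pS SS QQt QtQ _ small_fit hlam _.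
set C := X *m Bhat *m centering_mx R K.+1.
have [I [cardI smallI]] := markov_subset (F := fun i => \sum_(l < K.+1) C i l ^+ 2) tau0 alpha01
  (fun i => sumr_ge0 _ (fun l _ => sqr_ge0 (C i l))) small_fit.
apply: (loewner_ge_sum_tens n0 (ltW c0) _ _
  (lambda_min_ge_whitened n0 pSigma pS SS (hlam I cardI))) => [i w | i w iI].
  have := mlogit_hessian_ge (row i Y) w QQt QtQ (lexx 0) (fun l => softmax_ge0 _ l).
  by rewrite mul0r.
apply: mlogit_hessian_ge => // [|l]; first exact: ltW.
apply: softmax_ge; rewrite -mulmxA QQt -!row_mul.
by under eq_bigr do rewrite mxE; exact: smallI.
Qed.
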